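(* Let $\mathcal{H}$ be a finite class of classifiers $h:\mathcal{X}\times\{-1,1\}\to\{0,1\}$ containing the two classifiers $\mathbf{1}[a=1]$ and $\mathbf{1}[a=-1]$, and suppose $\gamma>2\nu>0$. Let $\mathrm{OPT}$ be the optimal value of $$\min_{\pi\in\Delta(\mathcal{H})}\mathbb{E}_{h\sim\pi}\Big[\sum_{j=1}^n w_j\mathbf{1}\{h(X_j)\neq Y_j\}\Big]\ \text{ s.t. }\ \forall j\in\{\pm1\}:\ \mathrm{FPR}_j(\pi)-\mathrm{FPR}_{-j}(\pi)\le\gamma,$$ and let $\mathrm{OPT}'$ be the optimal value of the same problem with $\gamma$ replaced by $\gamma-2\nu$. Then $\mathrm{OPT}'-\mathrm{OPT}\le2\nu$.
   Context: $X_j=(\hat x_j,a_j)$ are points, $Y_j\in\{0,1\}$ labels, $w_j\ge0$ weights with $\sum_j w_j=1$. $\mathcal{D}_E$ is a fixed empirical distribution of labeled examples $(\hat x,a,y)$ containing negative examples of both groups, and $\mathrm{FPR}_j(\pi)=\mathbb{E}_{h\sim\pi}[\Pr_{\mathcal{D}_E}(h(x)=1\mid a=j,y\text{ negative})]$ for $\pi\in\Delta(\mathcal{H})$, the set of distributions over $\mathcal{H}$. *)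

From mathcomp Require Import all_boot all_order all_algebra.
Set Implicit Arguments. Unset Strict Implicit. Unset Printing Implicit Defensive.
Import Order.TTheory GRing.Theory Num.Theory.
Local Open Scope ring_scope.

(* Group attribute a in {-1,1} is encoded as a bool: true <-> a = 1,
   false <-> a = -1 (so "-j" is "~~ j").  Labels Y in {0,1} are bools
   (false = 0 = negative). The finite class H is given as a finite
   index type H with interpretation cls : H -> (X -> bool -> bool). *)

Section Defs.
Variables (R : realFieldType) (X : Type) (H : finType)
          (cls : H -> X -> bool -> bool).

Definition is_distr (pi : {ffun H -> R}) : Prop :=
  (forall h, 0 <= pi h) /\ \sum_(h : H) pi h = 1.

Definition werr (n : nat) (Xs : 'I_n -> X * bool) (Ys : 'I_n -> bool)
  (w : 'I_n -> R) (pi : {ffun H -> R}) : R :=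
  \sum_(h : H) pi h *
    \sum_(j < n) w j * (cls h (Xs j).1 (Xs j).2 != Ys j)%:R.

(* The empirical distribution D_E is uniform over a finite sample
   (with multiplicities) of labeled examples (xhat, a, y). *)
Definition neg_of (S : seq (X * bool * bool)) (g : bool) :=
  [seq e <- S | (e.1.2 == g) && ~~ e.2].

Definition fpr_h (S : seq (X * bool * bool)) (h : H) (g : bool) : R :=
  (count (fun e : X * bool * bool => cls h e.1.1 e.1.2) (neg_of S g))%:R
  / (size (neg_of S g))%:R.

Definition FPR (S : seq (X * bool * bool)) (g : bool) (pi : {ffun H -> R}) : R :=
  \sum_(h : H) pi h * fpr_h S h g.

Definition feasible (S : seq (X * bool * bool)) (gamma : R)
  (pi : {ffun H -> R}) : Prop :=
  is_distr pi /\ forall g : bool, FPR S g pi - FPR S (~~ g) pi <= gamma.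

Definition is_opt_value (n : nat) (Xs : 'I_n -> X * bool) (Ys : 'I_n -> bool)
  (w : 'I_n -> R) (S : seq (X * bool * bool)) (gamma : R) (v : R) : Prop :=
  (exists pi, feasible S gamma pi /\ werr Xs Ys w pi = v) /\
  (forall pi, feasible S gamma pi -> v <= werr Xs Ys w pi).

End Defs.

From mathcomp Require Import all_boot all_order all_algebra.
From mathcomp Require Import ring lra.
Set Implicit Arguments.
Unset Strict Implicit.
Unset Printing Implicit Defensive.
Import Order.TTheory GRing.Theory Num.Theory.
Local Open Scope ring_scope.

(* Take an optimal [pi] for the constraint level [gamma].  If its FPR gap
   [D = FPR_g pi - FPR_{-g} pi] exceeds [gamma - 2 nu] for some group [g],
   mix [pi] with the classifier [h(x, a) = 1[a <> g]], whose FPR is [0] on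
   group [g] and [1] on group [-g].  With weight [t = (D - gamma')/(1 + D)]
   the gap becomes exactly [gamma' = gamma - 2 nu], and since errors lie in
   [[0, 1]] the error grows by at most [t <= D - gamma' <= 2 nu]. *)

Section Repair.
Variables (R : realFieldType) (X : Type) (H : finType)
          (cls : H -> X -> bool -> bool).

Definition mix (pi : {ffun H -> R}) (t : R) (h : H) : {ffun H -> R} :=
  [ffun k => (1 - t) * pi k + t * (k == h)%:R].

Lemma sum_mix pi t h (F : H -> R) :
  \sum_k mix pi t h k * F k = (1 - t) * \sum_k pi k * F k + t * F h.
Proof.
under eq_bigr do rewrite ffunE mulrDl.
rewrite big_split /= mulr_sumr; congr (_ + _).
  by apply: eq_bigr => k _; rewrite mulrA.
rewrite (bigD1 h) //= eqxx mulr1 big1 ?addr0 // => k /negbTE ->.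
by rewrite mulr0 mul0r.
Qed.

Lemma is_distr_mix pi t h :
  is_distr pi -> 0 <= t <= 1 -> is_distr (mix pi t h).
Proof.
move=> [pi_ge0 pi_sum1] /andP[t_ge0 t_le1]; split.
  move=> k; rewrite ffunE addr_ge0 // mulr_ge0 ?ler0n //.
  by rewrite subr_ge0.
have := sum_mix pi t h (fun=> 1).
under eq_bigr do rewrite mulr1; move=> ->.
by under eq_bigr do rewrite mulr1; rewrite pi_sum1; ring.
Qed.

Lemma count_neg_of_group S (c : bool -> bool) g :
  count (fun e : X * bool * bool => c e.1.2) (neg_of S g)
  = if c g then size (neg_of S g) else 0%N.
Proof.
rewrite /neg_of; elim: S => [|e S IH] /=; first by case: (c g).
case: ifP => [/andP[/eqP eg _]|_] /=; rewrite IH //.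
by rewrite eg; case: (c g).
Qed.

Lemma fpr_h_group_indicator S h g g' :
  (forall x a, cls h x a = (a != g)) -> (0 < size (neg_of S g'))%N ->
  fpr_h R cls S h g' = (g' != g)%:R.
Proof.
move=> cls_h neg_gt0; rewrite /fpr_h (eq_count (a2 := fun e => e.1.2 != g)).
  rewrite (count_neg_of_group _ (fun a => a != g)).
  by case: (g' != g); rewrite ?mul0r // divff // pnatr_eq0 -lt0n.
by move=> e; rewrite cls_h.
Qed.

Lemma FPR_mix_group_indicator S pi t h g g' :
  (forall x a, cls h x a = (a != g)) -> (0 < size (neg_of S g'))%N ->
  FPR cls S g' (mix pi t h) = (1 - t) * FPR cls S g' pi + t * (g' != g)%:R.
Proof.
by move=> cls_h neg_gt0; rewrite /FPR sum_mix (fpr_h_group_indicator cls_h).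
Qed.

Lemma exists_group_indicator :
  (exists h1, forall x a, cls h1 x a = a) ->
  (exists h2, forall x a, cls h2 x a = ~~ a) ->
  forall g, exists h, forall x a, cls h x a = (a != g).
Proof.
by move=> [h1 cls_h1] [h2 cls_h2] [|]; [exists h2 | exists h1] => x a;
  rewrite ?cls_h1 ?cls_h2; case: a.
Qed.

Variables (n : nat) (Xs : 'I_n -> X * bool) (Ys : 'I_n -> bool)
          (w : 'I_n -> R).
Hypotheses (w_ge0 : forall j, 0 <= w j) (w_sum1 : \sum_(j < n) w j = 1).

Definition err (h : H) : R :=
  \sum_(j < n) w j * (cls h (Xs j).1 (Xs j).2 != Ys j)%:R.

Lemma err_ge0 h : 0 <= err h.
Proof. by apply: sumr_ge0 => j _; rewrite mulr_ge0 ?ler0n. Qed.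

Lemma err_le1 h : err h <= 1.
Proof.
rewrite -w_sum1; apply: ler_sum => j _.
by case: (_ != _); rewrite ?mulr1 ?mulr0.
Qed.

Lemma werr_ge0 pi : is_distr pi -> 0 <= werr cls Xs Ys w pi.
Proof.
by case=> pi_ge0 _; apply: sumr_ge0 => k _; rewrite mulr_ge0 ?err_ge0.
Qed.

Lemma werr_mix_le pi t h :
  is_distr pi -> 0 <= t ->
  werr cls Xs Ys w (mix pi t h) <= werr cls Xs Ys w pi + t.
Proof.
move=> pi_distr t_ge0; rewrite /werr sum_mix -/(err h).
have := werr_ge0 pi_distr; have := err_ge0 h; have := err_le1 h.
rewrite /werr; nra.
Qed.

Lemma feasible_mix_group_indicator S pi g h (gamma : R) :
  (forall x a, cls h x a = (a != g)) ->
  (forall g, 0 < size (neg_of S g))%N -> 0 <= gamma -> is_distr pi ->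
  let D := FPR cls S g pi - FPR cls S (~~ g) pi in
  gamma < D ->
  exists pi', feasible cls S gamma pi' /\
    werr cls Xs Ys w pi' <= werr cls Xs Ys w pi + (D - gamma).
Proof.
move=> cls_h neg_gt0 gamma_ge0 pi_distr D gamma_lt_D.
have D1_gt0 : 0 < 1 + D by lra.
pose t := (D - gamma) / (1 + D).
have t_D1 : t * (1 + D) = D - gamma by rewrite divfK ?gt_eqF.
have t_ge0 : 0 <= t by rewrite divr_ge0 //; lra.
have t_le : t <= D - gamma by rewrite ler_pdivrMr //; nra.
have t_le1 : t <= 1 by rewrite ler_pdivrMr //; lra.
have gap_mix : FPR cls S g (mix pi t h) - FPR cls S (~~ g) (mix pi t h) = gamma.
  rewrite !(FPR_mix_group_indicator pi t cls_h) // eqxx negb_eqb addNb addbb.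
  transitivity (D - t * (1 + D)); first by rewrite /D /=; ring.
  by rewrite t_D1; ring.
exists (mix pi t h); split; last by have := werr_mix_le h pi_distr t_ge0; lra.
split; first by apply: is_distr_mix => //; apply/andP.
move=> g'; have [->|g'_neq_g] := eqVneq g' g; first by rewrite gap_mix.
have -> : g' = ~~ g by move: g'_neq_g; case: (g'); case: (g).
by rewrite negbK -opprB gap_mix; lra.
Qed.

End Repair.

Theorem lemma11 (R : realFieldType) (X : Type) (H : finType)
  (cls : H -> X -> bool -> bool)
  (Hpos : exists h1 : H, forall x a, cls h1 x a = a)
  (Hneg : exists h2 : H, forall x a, cls h2 x a = ~~ a)
  (n : nat) (Xs : 'I_n -> X * bool) (Ys : 'I_n -> bool) (w : 'I_n -> R)
  (hw0 : forall j, 0 <= w j) (hw1 : \sum_(j < n) w j = 1)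
  (S : seq (X * bool * bool))
  (hS : forall g : bool, (0 < size (neg_of S g))%N)
  (gamma nu : R) (hnu : 0 < nu) (hgn : 2 * nu < gamma)
  (OPT OPT' : R)
  (hOPT : is_opt_value cls Xs Ys w S gamma OPT)
  (hOPT' : is_opt_value cls Xs Ys w S (gamma - 2 * nu) OPT') :
  OPT' - OPT <= 2 * nu.
Proof.
have [[pi [[pi_distr gap_le] <-]] _] := hOPT; have [_ OPT'_min] := hOPT'.
suff [pi' pi'_feas pi'_err] : exists2 pi', feasible cls S (gamma - 2 * nu) pi'
    & werr cls Xs Ys w pi' <= werr cls Xs Ys w pi + 2 * nu.
  by have := OPT'_min _ pi'_feas; lra.
have [/existsP[g gap_gt] | /existsPn gap_le'] :=
  boolP [exists g, gamma - 2 * nu < FPR cls S g pi - FPR cls S (~~ g) pi].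
  have [h cls_h] := exists_group_indicator Hpos Hneg g.
  have [|pi' [pi'_feas pi'_err]] :=
    feasible_mix_group_indicator Xs Ys hw0 hw1 cls_h hS _ pi_distr gap_gt.
    by lra.
  by exists pi' => //; have := gap_le g; lra.
by exists pi; [split=> // g; rewrite leNgt gap_le' | lra].
Qed.
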